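(* Let $\ell>0$ and $\gamma\in\Sigma^\ell$ with length $\mathscr{L}(\gamma)=L$. Then its arclength parametrization $\Gamma:\mathbb{R}/L\mathbb{Z}\to\mathbb{R}^3$ (starting at $\Gamma(0)=\gamma(0)$, with the same orientation) is also $D_2$-symmetric, i.e. $\Gamma\in\Sigma^L$.
   Context: $R_0=\mathrm{Id}$, $R_1=\mathrm{diag}(1,-1,-1)$, $R_2=\mathrm{diag}(-1,1,-1)$, $R_3=\mathrm{diag}(-1,-1,1)$. For $\ell>0$, on $\mathbb{R}/\ell\mathbb{Z}$: $\psi_0^\ell(t)=t$, $\psi_1^\ell(t)=-t+\ell/2$, $\psi_2^\ell(t)=t-\ell/2$, $\psi_3^\ell(t)=-t+\ell$ (mod $\ell$); $\tau^\ell_{d_i}(\gamma)(t)=R_i\gamma(\psi_i^\ell(t))$. $\Sigma^\ell=\{\gamma\in C^0(\mathbb{R}/\ell\mathbb{Z},\mathbb{R}^3):0<\mathscr{L}(\gamma)<\infty,\ \tau^\ell_{d_i}(\gamma)=\gamma,\ i=0,1,2,3\}$, $\mathscr{L}$ denoting length. *)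

From Stdlib Require Import Reals Lra List Sorted.
From Coquelicot Require Import Coquelicot.
Open Scope R_scope.

Definition vec3 : Type := (R * R * R)%type.

Definition vx (p : vec3) : R := fst (fst p).
Definition vy (p : vec3) : R := snd (fst p).
Definition vz (p : vec3) : R := snd p.

Definition dist3 (p q : vec3) : R :=
  sqrt ((vx p - vx q) ^ 2 + (vy p - vy q) ^ 2 + (vz p - vz q) ^ 2).

(* A curve on R/lZ is represented as an l-periodic map R -> R^3. *)
Definition periodic (l : R) (g : R -> vec3) : Prop :=
  forall t, g (t + l) = g t.

Definition continuous3 (g : R -> vec3) : Prop :=
  forall t, continuity_pt (fun s => vx (g s)) t /\
            continuity_pt (fun s => vy (g s)) t /\
            continuity_pt (fun s => vz (g s)) t.

Fixpoint polylen (g : R -> vec3) (x : R) (l : list R) : R :=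
  match l with
  | nil => 0
  | y :: l' => dist3 (g x) (g y) + polylen g y l'
  end.

Definition arclen (g : R -> vec3) (a b : R) : Rbar :=
  Lub_Rbar (fun v => exists l : list R,
     Sorted Rle (a :: l) /\ last l a = b /\ v = polylen g a l).

Definition curve_length (l : R) (g : R -> vec3) : Rbar := arclen g 0 l.

Inductive D2 : Type := d0 | d1 | d2 | d3.

Definition Rmat (i : D2) (p : vec3) : vec3 :=
  match i with
  | d0 => p
  | d1 => (vx p, - vy p, - vz p)
  | d2 => (- vx p, vy p, - vz p)
  | d3 => (- vx p, - vy p, vz p)
  end.

(* psi_i^l; reduction mod l is unnecessary since curves are l-periodic. *)
Definition psi (i : D2) (l t : R) : R :=
  match i with
  | d0 => t
  | d1 => - t + l / 2
  | d2 => t - l / 2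
  | d3 => - t + l
  end.

Definition tau (i : D2) (l : R) (g : R -> vec3) : R -> vec3 :=
  fun t => Rmat i (g (psi i l t)).

Definition Sigma (l : R) (g : R -> vec3) : Prop :=
  periodic l g /\ continuous3 g /\
  Rbar_lt 0 (curve_length l g) /\ is_finite (curve_length l g) /\
  forall i : D2, forall t, tau i l g t = g t.

Definition arclength_param (l : R) (g G : R -> vec3) : Prop :=
  periodic (real (curve_length l g)) G /\
  G 0 = g 0 /\
  forall t, 0 <= t <= l -> G (real (arclen g 0 t)) = g t.

From Pilot Require Import Defs.
From Stdlib Require Import Reals Lra Lia List Sorted ZArith.
From Stdlib Require Import Classical FunctionalExtensionality IndefiniteDescription.
From Coquelicot Require Import Coquelicot.
Open Scope R_scope.

(* The arclength function s(t) = L(gamma|[0,t]) is continuous (length is additive, and a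
   partition can be refined near any point at small cost) and nondecreasing from [0,l] onto
   [0,L], with |gamma t - gamma t'| <= |s t - s t'|.  Hence Gamma (s t + k L) = gamma t
   determines Gamma, which is 1-Lipschitz, so continuous and of length exactly L.  Length is
   invariant under isometries of R^3 and under t -> t + l/2 and t -> l - t; with the
   symmetries of gamma this gives s (t + l/2) = s t + L/2 and s (l - t) = L - s t, which turn
   the symmetries psi_i^l of gamma into the symmetries psi_i^L of Gamma. *)

(** * Euclidean geometry of R^3 *)

Lemma dist3_ge0 p q : 0 <= dist3 p q.
Proof. apply sqrt_pos. Qed.

Lemma dist3_comm p q : dist3 p q = dist3 q p.
Proof. unfold dist3; f_equal; ring. Qed.

Lemma dist3_xx p : dist3 p p = 0.
Proof. unfold dist3; rewrite <- sqrt_0; f_equal; ring. Qed.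

Lemma dist3_eq0 p q : dist3 p q = 0 -> p = q.
Proof.
  destruct p as [[x y] z], q as [[x' y'] z']; unfold dist3, vx, vy, vz; simpl.
  intro H.
  pose proof (pow2_ge_0 (x - x')); pose proof (pow2_ge_0 (y - y')); pose proof (pow2_ge_0 (z - z')).
  apply sqrt_eq_0 in H; [|lra].
  assert (x = x') by nra; assert (y = y') by nra; assert (z = z') by nra.
  now subst.
Qed.

Lemma dot3_le_norms u1 u2 u3 v1 v2 v3 :
  u1 * v1 + u2 * v2 + u3 * v3 <=
  sqrt (u1 ^ 2 + u2 ^ 2 + u3 ^ 2) * sqrt (v1 ^ 2 + v2 ^ 2 + v3 ^ 2).
Proof.
  rewrite <- sqrt_mult by nra.
  destruct (Rle_dec (u1 * v1 + u2 * v2 + u3 * v3) 0) as [Hneg | Hpos].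
  - pose proof (sqrt_pos ((u1 ^ 2 + u2 ^ 2 + u3 ^ 2) * (v1 ^ 2 + v2 ^ 2 + v3 ^ 2))); lra.
  - rewrite <- (sqrt_square (u1 * v1 + u2 * v2 + u3 * v3)) by lra.
    apply sqrt_le_1_alt.
    (* Lagrange's identity *)
    assert (Hlag : (u1 ^ 2 + u2 ^ 2 + u3 ^ 2) * (v1 ^ 2 + v2 ^ 2 + v3 ^ 2) =
      (u1 * v1 + u2 * v2 + u3 * v3) ^ 2 +
      ((u1 * v2 - u2 * v1) ^ 2 + (u1 * v3 - u3 * v1) ^ 2 + (u2 * v3 - u3 * v2) ^ 2)) by ring.
    pose proof (pow2_ge_0 (u1 * v2 - u2 * v1)); pose proof (pow2_ge_0 (u1 * v3 - u3 * v1));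
      pose proof (pow2_ge_0 (u2 * v3 - u3 * v2)); nra.
Qed.

Lemma minkowski3 u1 u2 u3 v1 v2 v3 :
  sqrt ((u1 + v1) ^ 2 + (u2 + v2) ^ 2 + (u3 + v3) ^ 2) <=
  sqrt (u1 ^ 2 + u2 ^ 2 + u3 ^ 2) + sqrt (v1 ^ 2 + v2 ^ 2 + v3 ^ 2).
Proof.
  set (a := sqrt (u1 ^ 2 + u2 ^ 2 + u3 ^ 2)); set (b := sqrt (v1 ^ 2 + v2 ^ 2 + v3 ^ 2)).
  assert (Ha : a * a = u1 ^ 2 + u2 ^ 2 + u3 ^ 2) by (apply sqrt_sqrt; nra).
  assert (Hb : b * b = v1 ^ 2 + v2 ^ 2 + v3 ^ 2) by (apply sqrt_sqrt; nra).
  pose proof (dot3_le_norms u1 u2 u3 v1 v2 v3) as Hcs; fold a b in Hcs.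
  pose proof (sqrt_pos (u1 ^ 2 + u2 ^ 2 + u3 ^ 2));
    pose proof (sqrt_pos (v1 ^ 2 + v2 ^ 2 + v3 ^ 2)).
  rewrite <- (sqrt_square (a + b)) by (unfold a, b; lra).
  apply sqrt_le_1_alt; nra.
Qed.

Lemma dist3_triangle p q r : dist3 p r <= dist3 p q + dist3 q r.
Proof.
  unfold dist3.
  replace (vx p - vx r) with ((vx p - vx q) + (vx q - vx r)) by ring.
  replace (vy p - vy r) with ((vy p - vy q) + (vy q - vy r)) by ring.
  replace (vz p - vz r) with ((vz p - vz q) + (vz q - vz r)) by ring.
  apply minkowski3.
Qed.

Lemma dist3_le_abs_sum p q :
  dist3 p q <= Rabs (vx p - vx q) + Rabs (vy p - vy q) + Rabs (vz p - vz q).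
Proof.
  unfold dist3.
  pose proof (Rabs_pos (vx p - vx q)); pose proof (Rabs_pos (vy p - vy q));
    pose proof (Rabs_pos (vz p - vz q)).
  rewrite <- sqrt_square by lra; apply sqrt_le_1_alt.
  rewrite <- (pow2_abs (vx p - vx q)), <- (pow2_abs (vy p - vy q)), <- (pow2_abs (vz p - vz q)).
  nra.
Qed.

Lemma abs_coord_le_dist3 p q :
  Rabs (vx p - vx q) <= dist3 p q /\ Rabs (vy p - vy q) <= dist3 p q /\
  Rabs (vz p - vz q) <= dist3 p q.
Proof.
  unfold dist3.
  assert (Habs : forall a b c, Rabs a <= sqrt (a ^ 2 + b ^ 2 + c ^ 2)).
  { intros a b c; rewrite <- sqrt_Rsqr_abs; apply sqrt_le_1_alt; unfold Rsqr; nra. }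
  repeat split.
  - apply Habs.
  - replace (_ + _ + _) with ((vy p - vy q) ^ 2 + (vx p - vx q) ^ 2 + (vz p - vz q) ^ 2) by ring.
    apply Habs.
  - replace (_ + _ + _) with ((vz p - vz q) ^ 2 + (vx p - vx q) ^ 2 + (vy p - vy q) ^ 2) by ring.
    apply Habs.
Qed.

Lemma dist3_Rmat i p q : dist3 (Rmat i p) (Rmat i q) = dist3 p q.
Proof. destruct i; unfold dist3, Rmat, vx, vy, vz; simpl; f_equal; ring. Qed.

Lemma Rmat_involutive i p : Rmat i (Rmat i p) = p.
Proof.
  destruct p as [[x y] z], i; unfold Rmat, vx, vy, vz; simpl; f_equal; try f_equal; ring.
Qed.

Lemma Rmat_d2_d3 p : Rmat Defs.d2 (Rmat Defs.d3 p) = Rmat Defs.d1 p.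
Proof. destruct p as [[x y] z]; unfold Rmat, vx, vy, vz; simpl; f_equal; try f_equal; ring. Qed.

Definition nonexpansive (h : R -> vec3) : Prop :=
  forall x y, dist3 (h x) (h y) <= Rabs (x - y).

Lemma nonexpansive_continuous3 h : nonexpansive h -> continuous3 h.
Proof.
  intros Hh t.
  assert (Hcoord : forall f : vec3 -> R, (forall p q, Rabs (f p - f q) <= dist3 p q) ->
                     continuity_pt (fun s => f (h s)) t).
  { intros f Hf eps Heps; exists eps; split; [exact Heps|].
    intros u [_ Hu]; simpl in *; unfold R_dist in *.
    pose proof (Hf (h u) (h t)); pose proof (Hh u t); lra. }
  repeat split; apply Hcoord; intros p q; apply abs_coord_le_dist3.
Qed.

Lemma periodic_IZR L (G : R -> vec3) : periodic L G -> forall k x, G (x + IZR k * L) = G x.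
Proof.
  intros HP k; induction k using Z.peano_ind; intros x.
  - simpl; f_equal; ring.
  - rewrite succ_IZR, <- (IHk x), <- (HP (x + IZR k * L)); f_equal; ring.
  - rewrite <- (IHk x), <- (HP (x + IZR (Z.pred k) * L)); f_equal.
    rewrite <- Z.sub_1_r, minus_IZR; change (IZR 1) with 1; ring.
Qed.

(** * Partitions and inscribed polygons *)

Lemma last_cons {A} (x : A) r d : last (x :: r) d = last r x.
Proof.
  revert x d; induction r as [|y r IH]; intros x d; [reflexivity|].
  change (last (x :: y :: r) d) with (last (y :: r) d); rewrite !IH; reflexivity.
Qed.

Lemma last_app {A} (l1 l2 : list A) a : last (l1 ++ l2) a = last l2 (last l1 a).
Proof.
  revert a; induction l1 as [|x r IH]; intros a; [reflexivity|].
  change ((x :: r) ++ l2) with (x :: (r ++ l2)); rewrite !last_cons; apply IH.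
Qed.

Lemma last_map {A B} (f : A -> B) l x : last (map f l) (f x) = f (last l x).
Proof.
  revert x; induction l as [|u r IH]; intros x; [reflexivity|].
  change (map f (u :: r)) with (f u :: map f r); rewrite !last_cons; apply IH.
Qed.

Lemma Sorted_app a l1 l2 :
  Sorted Rle (a :: l1) -> Sorted Rle (last l1 a :: l2) -> Sorted Rle (a :: l1 ++ l2).
Proof.
  revert a; induction l1 as [|x r IH]; intros a H1 H2; [exact H2|].
  rewrite last_cons in H2.
  apply Sorted_inv in H1 as [H1 Hax]; apply HdRel_inv in Hax.
  constructor; [apply IH; assumption | constructor; exact Hax].
Qed.

Lemma Sorted_snoc l x :
  Sorted Rle l -> (forall d, l <> nil -> last l d <= x) -> Sorted Rle (l ++ x :: nil).
Proof.
  induction 1 as [|y r Hr IH Hy]; intros Hlast; simpl; [repeat constructor|].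
  constructor.
  - apply IH; intros d Hne; destruct r as [|z r]; [congruence|].
    specialize (Hlast d ltac:(discriminate)).
    rewrite last_cons, last_cons in Hlast; rewrite last_cons; exact Hlast.
  - destruct r as [|z r]; simpl; constructor.
    + exact (Hlast y ltac:(discriminate)).
    + exact (HdRel_inv Hy).
Qed.

Lemma Sorted_map_in (P : R -> Prop) f l :
  List.Forall P l -> (forall x y, P x -> P y -> x <= y -> f x <= f y) ->
  Sorted Rle l -> Sorted Rle (map f l).
Proof.
  intros HP Hf HS; induction HS as [|x r Hr IH Hx]; simpl; [constructor|].
  apply Forall_inv_tail in HP as HPr; apply Forall_inv in HP.
  constructor; [apply IH; exact HPr|].
  destruct r as [|y r]; simpl; constructor.
  apply Hf; [exact HP | exact (Forall_inv HPr) | exact (HdRel_inv Hx)].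
Qed.

Lemma Sorted_rev_map f l :
  (forall x y, x <= y -> f y <= f x) -> Sorted Rle l -> Sorted Rle (rev (map f l)).
Proof.
  intros Hf HS; induction HS as [|x r Hr IH Hx]; simpl; [constructor|].
  apply Sorted_snoc; [exact IH|].
  intros d Hne; destruct r as [|y r]; [contradiction|].
  simpl; rewrite last_last; apply Hf, (HdRel_inv Hx).
Qed.

Lemma Sorted_bounds a b l :
  Sorted Rle (a :: l) -> last l a = b -> List.Forall (fun x => a <= x <= b) l /\ a <= b.
Proof.
  revert a; induction l as [|x r IH]; intros a HS Hb.
  - simpl in Hb; split; [constructor | lra].
  - rewrite last_cons in Hb.
    apply Sorted_inv in HS as [HS Hax]; apply HdRel_inv in Hax.
    destruct (IH x HS Hb) as [Hr Hxb]; split; [|lra].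
    constructor; [lra|].
    eapply Forall_impl; [|exact Hr]; simpl; intros; lra.
Qed.

Lemma polylen_app g a l1 l2 :
  polylen g a (l1 ++ l2) = polylen g a l1 + polylen g (last l1 a) l2.
Proof.
  revert a; induction l1 as [|x r IH]; intros a; [simpl; ring|].
  rewrite last_cons; simpl; rewrite IH; ring.
Qed.

Lemma polylen_ge0 g a l : 0 <= polylen g a l.
Proof.
  revert a; induction l as [|x r IH]; intros a; simpl; [lra|].
  pose proof (dist3_ge0 (g a) (g x)); pose proof (IH x); lra.
Qed.

Lemma polylen_map (g h : R -> vec3) f x y l :
  List.Forall (fun u => h (f u) = g u) l -> h y = g x -> polylen h y (map f l) = polylen g x l.
Proof.
  revert x y; induction l as [|u r IH]; intros x y Hl Hy; simpl; [reflexivity|].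
  rewrite Hy, (Forall_inv Hl); f_equal.
  apply IH; [exact (Forall_inv_tail Hl) | exact (Forall_inv Hl)].
Qed.

Lemma polylen_ext_dist (g h : R -> vec3) x l :
  (forall x y, dist3 (h x) (h y) = dist3 (g x) (g y)) -> polylen h x l = polylen g x l.
Proof.
  intros H; revert x; induction l as [|u r IH]; intros x; simpl; [reflexivity|].
  rewrite H, IH; reflexivity.
Qed.

Lemma polylen_le_nonexpansive h a l :
  nonexpansive h -> Sorted Rle (a :: l) -> polylen h a l <= last l a - a.
Proof.
  intros Hh; revert a; induction l as [|x r IH]; intros a HS; [simpl; lra|].
  rewrite last_cons; simpl; apply Sorted_inv in HS as [HS Hax]; apply HdRel_inv in Hax.
  pose proof (Hh a x); pose proof (IH x HS); rewrite Rabs_minus_sym, Rabs_right in * by lra; lra.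
Qed.

Definition pathlen g (F : list R) : R :=
  match F with nil => 0 | x :: r => polylen g x r end.

Lemma pathlen_snoc g F y :
  F <> nil -> pathlen g (F ++ y :: nil) = pathlen g F + dist3 (g (last F 0)) (g y).
Proof.
  destruct F as [|x r]; intros Hne; [congruence|].
  rewrite last_cons; change ((x :: r) ++ y :: nil) with (x :: (r ++ y :: nil)).
  simpl; rewrite polylen_app; simpl; ring.
Qed.

Lemma pathlen_rev g F : pathlen g (rev F) = pathlen g F.
Proof.
  induction F as [|x r IH]; [reflexivity|].
  destruct r as [|y r]; [simpl; ring|].
  change (rev (x :: y :: r)) with (rev (y :: r) ++ x :: nil).
  rewrite pathlen_snoc, IH.
  - simpl; rewrite last_last, dist3_comm; ring.
  - intro E; apply (f_equal (@length R)) in E; rewrite length_rev in E; discriminate.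
Qed.

Lemma pathlen_map g h f F : (forall u, h (f u) = g u) -> pathlen h (map f F) = pathlen g F.
Proof.
  intros H; destruct F as [|x r]; simpl; [reflexivity|].
  apply polylen_map; [apply Forall_forall; auto | apply H].
Qed.

(** * Arc length *)

Definition inscribed (g : R -> vec3) (a b : R) : R -> Prop :=
  fun v => exists l, Sorted Rle (a :: l) /\ last l a = b /\ v = polylen g a l.

Definition rectifiable (g : R -> vec3) (a b : R) : Prop := is_finite (arclen g a b).

Definition arclenr (g : R -> vec3) (a b : R) : R := real (arclen g a b).

Lemma Lub_Rbar_finite_ub (E : R -> Prop) v :
  is_finite (Lub_Rbar E) -> E v -> v <= real (Lub_Rbar E).
Proof.
  intros Hfin Hv; pose proof (proj1 (Lub_Rbar_correct E) v Hv) as Hle.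
  rewrite <- Hfin in Hle; exact Hle.
Qed.

Lemma Lub_Rbar_finite_le (E : R -> Prop) M :
  (exists v, E v) -> (forall v, E v -> v <= M) ->
  is_finite (Lub_Rbar E) /\ real (Lub_Rbar E) <= M.
Proof.
  intros [v Hv] HM; destruct (Lub_Rbar_correct E) as [Hub Hlub].
  assert (Hle : Rbar_le (Lub_Rbar E) (Finite M)) by (apply Hlub; intros x Hx; apply HM, Hx).
  pose proof (Hub v Hv) as Hge.
  destruct (Lub_Rbar E); simpl in *; try contradiction; split; [reflexivity | exact Hle].
Qed.

Lemma Lub_Rbar_approx (E : R -> Prop) eps :
  is_finite (Lub_Rbar E) -> 0 < eps -> exists v, E v /\ real (Lub_Rbar E) - eps < v.
Proof.
  intros Hfin Heps; apply NNPP; intros Hnot.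
  assert (Hle : Rbar_le (Lub_Rbar E) (Finite (real (Lub_Rbar E) - eps))).
  { apply (proj2 (Lub_Rbar_correct E)); intros v Hv; simpl.
    apply Rnot_lt_le; intros Hlt; apply Hnot; exists v; split; assumption. }
  rewrite <- Hfin in Hle; simpl in Hle; lra.
Qed.

Lemma inscribed_chord g a b : a <= b -> inscribed g a b (dist3 (g a) (g b)).
Proof.
  intros Hab; exists (b :: nil); split; [|split].
  - apply Sorted_cons; [apply Sorted_cons; constructor | constructor; exact Hab].
  - reflexivity.
  - simpl; ring.
Qed.

Lemma inscribed_ge0 g a b v : inscribed g a b v -> 0 <= v.
Proof. intros [l [_ [_ ->]]]; apply polylen_ge0. Qed.

Lemma inscribed_le_arclenr g a b v : rectifiable g a b -> inscribed g a b v -> v <= arclenr g a b.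
Proof. apply Lub_Rbar_finite_ub. Qed.

Lemma rectifiable_bounded g a b M :
  a <= b -> (forall v, inscribed g a b v -> v <= M) -> rectifiable g a b /\ arclenr g a b <= M.
Proof. intros Hab; apply Lub_Rbar_finite_le; eexists; apply inscribed_chord, Hab. Qed.

Lemma inscribed_concat g a b c p q :
  inscribed g a b p -> inscribed g b c q -> inscribed g a c (p + q).
Proof.
  intros [l1 [S1 [L1 ->]]] [l2 [S2 [L2 ->]]]; subst b; exists (l1 ++ l2); repeat split.
  - apply Sorted_app; assumption.
  - rewrite last_app; exact L2.
  - rewrite polylen_app; reflexivity.
Qed.

(* Inserting b into a partition of [a,c] can only increase the polygon length. *)
Lemma inscribed_split g a b c r :
  inscribed g a c r -> a <= b <= c ->
  exists p q, inscribed g a b p /\ inscribed g b c q /\ r <= p + q.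
Proof.
  intros [l [HS [Hl ->]]]; revert a HS Hl; induction l as [|x rest IH]; intros a HS Hl Hb.
  - simpl in Hl; subst c; assert (b = a) by lra; subst b.
    exists 0, 0; repeat split; [exists nil; repeat split; auto .. | simpl; lra].
  - rewrite last_cons in Hl; apply Sorted_inv in HS as [HS Hax]; apply HdRel_inv in Hax.
    destruct (Rle_dec x b) as [Hxb | Hxb].
    + destruct (IH x HS Hl ltac:(lra)) as [p [q [[l1 [S1 [L1 ->]]] [Hq Hle]]]].
      exists (dist3 (g a) (g x) + polylen g x l1), q; repeat split; [|exact Hq|simpl; lra].
      exists (x :: l1); repeat split.
      * constructor; [exact S1 | constructor; exact Hax].
      * rewrite last_cons; exact L1.
    + exists (dist3 (g a) (g b)), (polylen g b (x :: rest)); repeat split.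
      * apply inscribed_chord; lra.
      * exists (x :: rest); repeat split.
        -- constructor; [exact HS | constructor; lra].
        -- rewrite last_cons; exact Hl.
      * simpl; pose proof (dist3_triangle (g a) (g b) (g x)); lra.
Qed.

Lemma arclen_additive g a b c :
  a <= b <= c -> rectifiable g a c ->
  rectifiable g a b /\ rectifiable g b c /\ arclenr g a c = arclenr g a b + arclenr g b c.
Proof.
  intros Hb Hac.
  assert (Hab : rectifiable g a b).
  { apply (rectifiable_bounded _ _ _ (arclenr g a c)); [lra|]; intros v Hv.
    pose proof (inscribed_chord g b c ltac:(lra)) as Hq; pose proof (inscribed_ge0 _ _ _ _ Hq).
    pose proof (inscribed_le_arclenr _ _ _ _ Hac (inscribed_concat _ _ _ _ _ _ Hv Hq)); lra. }
  assert (Hbc : rectifiable g b c).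
  { apply (rectifiable_bounded _ _ _ (arclenr g a c)); [lra|]; intros v Hv.
    pose proof (inscribed_chord g a b ltac:(lra)) as Hp; pose proof (inscribed_ge0 _ _ _ _ Hp).
    pose proof (inscribed_le_arclenr _ _ _ _ Hac (inscribed_concat _ _ _ _ _ _ Hp Hv)); lra. }
  repeat split; [exact Hab | exact Hbc |]; apply Rle_antisym.
  - apply (rectifiable_bounded g a c); [lra|]; intros r Hr.
    destruct (inscribed_split _ _ _ _ _ Hr Hb) as [p [q [Hp [Hq Hle]]]].
    pose proof (inscribed_le_arclenr _ _ _ _ Hab Hp).
    pose proof (inscribed_le_arclenr _ _ _ _ Hbc Hq); lra.
  - apply Rnot_lt_le; intros Hlt.
    set (eps := (arclenr g a b + arclenr g b c - arclenr g a c) / 4).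
    destruct (Lub_Rbar_approx _ eps Hab ltac:(unfold eps; lra)) as [p [Hp Hpe]].
    destruct (Lub_Rbar_approx _ eps Hbc ltac:(unfold eps; lra)) as [q [Hq Hqe]].
    pose proof (inscribed_le_arclenr _ _ _ _ Hac (inscribed_concat _ _ _ _ _ _ Hp Hq)).
    unfold arclenr, arclen in *; unfold eps in *; lra.
Qed.

Lemma chord_le_arclenr g a b : a <= b -> rectifiable g a b -> dist3 (g a) (g b) <= arclenr g a b.
Proof. intros Hab Hfin; apply inscribed_le_arclenr, inscribed_chord; assumption. Qed.

Lemma arclenr_ge0 g a b : a <= b -> rectifiable g a b -> 0 <= arclenr g a b.
Proof.
  intros Hab Hfin; pose proof (chord_le_arclenr g a b Hab Hfin).
  pose proof (dist3_ge0 (g a) (g b)); lra.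
Qed.

Lemma arclen_ext_dist (g h : R -> vec3) a b :
  (forall x y, dist3 (h x) (h y) = dist3 (g x) (g y)) -> arclen h a b = arclen g a b.
Proof.
  intros H; apply Lub_Rbar_eqset; intros v.
  split; intros [l [HS [Hl ->]]]; exists l; repeat split; auto;
    [| symmetry]; apply polylen_ext_dist; exact H.
Qed.

Lemma arclen_shift g a b c : arclen g (a + c) (b + c) = arclen (fun u => g (u + c)) a b.
Proof.
  apply Lub_Rbar_eqset; intros v; split; intros [l [HS [Hl ->]]].
  - exists (map (fun u => u - c) l); repeat split.
    + replace a with (a + c - c) at 1 by ring.
      apply (Sorted_map_in (fun _ => True) (fun u => u - c) (a + c :: l)); auto.
      * apply Forall_forall; auto.
      * intros; lra.
    + replace a with (a + c - c) at 1 by ring; rewrite (last_map (fun u => u - c)), Hl; ring.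
    + symmetry; apply polylen_map; [apply Forall_forall; intros u _ |]; f_equal; ring.
  - exists (map (fun u => u + c) l); repeat split.
    + apply (Sorted_map_in (fun _ => True) (fun u => u + c) (a :: l)); auto.
      * apply Forall_forall; auto.
      * intros; lra.
    + rewrite (last_map (fun u => u + c)), Hl; reflexivity.
    + symmetry; apply polylen_map; [apply Forall_forall; intros u _ |]; reflexivity.
Qed.

Lemma inscribed_rev g a b c v :
  inscribed g a b v -> inscribed (fun u => g (c - u)) (c - b) (c - a) v.
Proof.
  intros [l [HS [Hl ->]]].
  set (F := rev (map (fun u => c - u) (a :: l))).
  assert (HSF : Sorted Rle F) by (apply Sorted_rev_map; [intros; lra | exact HS]).
  assert (HlenF : pathlen (fun u => g (c - u)) F = polylen g a l).
  { unfold F; rewrite pathlen_rev; apply (pathlen_map g _ _ (a :: l)); intros u; f_equal; ring. }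
  assert (HF : F = (c - b) :: rev (map (fun u => c - u) (removelast (a :: l)))).
  { unfold F; rewrite (app_removelast_last a (l := a :: l)) at 1 by discriminate.
    rewrite map_app, rev_app_distr, last_cons, Hl; reflexivity. }
  rewrite HF in HSF, HlenF; exists (rev (map (fun u => c - u) (removelast (a :: l)))).
  repeat split; [exact HSF | | exact (eq_sym HlenF)].
  rewrite <- last_cons with (d := 0), <- HF; unfold F; simpl; rewrite last_last; reflexivity.
Qed.

Lemma arclen_rev g a b c : arclen g a b = arclen (fun u => g (c - u)) (c - b) (c - a).
Proof.
  apply Lub_Rbar_eqset; intros v; split; [apply inscribed_rev|].
  intros Hv; apply (inscribed_rev _ _ _ c) in Hv.
  replace (c - (c - a)) with a in Hv by ring; replace (c - (c - b)) with b in Hv by ring.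
  replace (fun u => g (c - (c - u))) with g in Hv; [exact Hv|].
  apply functional_extensionality; intros u; f_equal; ring.
Qed.

Lemma arclen_nonexpansive_le h a b :
  nonexpansive h -> a <= b -> rectifiable h a b /\ arclenr h a b <= b - a.
Proof.
  intros Hh Hab; apply rectifiable_bounded; [exact Hab|].
  intros v [l [HS [Hl ->]]]; rewrite <- Hl; apply polylen_le_nonexpansive; assumption.
Qed.

Lemma arclen_reparam_ge g h phi a b :
  a <= b ->
  (forall x y, a <= x <= b -> a <= y <= b -> x <= y -> phi x <= phi y) ->
  (forall t, a <= t <= b -> h (phi t) = g t) ->
  rectifiable h (phi a) (phi b) ->
  rectifiable g a b /\ arclenr g a b <= arclenr h (phi a) (phi b).
Proof.
  intros Hab Hmono Hhg Hfin; apply rectifiable_bounded; [exact Hab|].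
  intros v [l [HS [Hl ->]]]; destruct (Sorted_bounds a b l HS Hl) as [Hin _].
  apply inscribed_le_arclenr; [exact Hfin|]; exists (map phi l); repeat split.
  - apply (Sorted_map_in (fun x => a <= x <= b) phi (a :: l));
      [constructor; [lra | exact Hin] | exact Hmono | exact HS].
  - rewrite last_map, Hl; reflexivity.
  - symmetry; apply polylen_map; [| apply Hhg; lra].
    eapply Forall_impl; [|exact Hin]; exact Hhg.
Qed.

Definition continuous3_at (h : R -> vec3) (a : R) : Prop :=
  forall eps, 0 < eps ->
  exists del, 0 < del /\ forall u, Rabs (u - a) < del -> dist3 (h a) (h u) < eps.

Lemma continuity_pt_eps f t eps :
  continuity_pt f t -> 0 < eps ->
  exists del, 0 < del /\ forall u, Rabs (u - t) < del -> Rabs (f t - f u) < eps.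
Proof.
  intros Hc Heps; destruct (Hc eps Heps) as [del [Hdel Hu]]; exists del; split; [exact Hdel|].
  intros u Hut; destruct (Req_dec u t) as [-> | Hne].
  - rewrite Rminus_diag, Rabs_R0; exact Heps.
  - rewrite Rabs_minus_sym; apply (Hu u); repeat split; auto.
Qed.

Lemma continuous3_continuous3_at g t : continuous3 g -> continuous3_at g t.
Proof.
  intros Hc eps Heps; destruct (Hc t) as [Cx [Cy Cz]].
  destruct (continuity_pt_eps _ _ (eps / 3) Cx ltac:(lra)) as [d1 [H1 K1]].
  destruct (continuity_pt_eps _ _ (eps / 3) Cy ltac:(lra)) as [d2 [H2 K2]].
  destruct (continuity_pt_eps _ _ (eps / 3) Cz ltac:(lra)) as [d3 [H3 K3]].
  exists (Rmin d1 (Rmin d2 d3)); split; [repeat apply Rmin_pos; assumption|].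
  intros u Hu; pose proof (Rmin_l d1 (Rmin d2 d3)); pose proof (Rmin_r d1 (Rmin d2 d3));
    pose proof (Rmin_l d2 d3); pose proof (Rmin_r d2 d3).
  pose proof (K1 u ltac:(lra)); pose proof (K2 u ltac:(lra)); pose proof (K3 u ltac:(lra)).
  pose proof (dist3_le_abs_sum (g t) (g u)); lra.
Qed.

Lemma exists_gap a l :
  List.Forall (Rle a) l -> exists d, 0 < d /\ List.Forall (fun x => x = a \/ a + d <= x) l.
Proof.
  induction l as [|x r IH]; intros Hl; [exists 1; split; [lra | constructor]|].
  destruct (IH (Forall_inv_tail Hl)) as [d [Hd Hr]].
  destruct (Rle_lt_or_eq_dec a x (Forall_inv Hl)) as [Hlt | Heq].
  - exists (Rmin d (x - a)); split; [apply Rmin_pos; lra|].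
    pose proof (Rmin_l d (x - a)); pose proof (Rmin_r d (x - a)).
    constructor; [right; lra|].
    eapply Forall_impl; [|exact Hr]; simpl; intros y [E | E]; [left | right; lra]; exact E.
  - exists d; split; [exact Hd|]; constructor; [left; auto | exact Hr].
Qed.

(* Points of the partition equal to [a] contribute nothing, so they can be traded for [u0]. *)
Lemma inscribed_restart h a b u0 l :
  Sorted Rle (a :: l) -> last l a = b -> a < u0 <= b ->
  List.Forall (fun x => x = a \/ u0 <= x) l ->
  exists q, inscribed h u0 b q /\ polylen h a l <= dist3 (h a) (h u0) + q.
Proof.
  induction l as [|x r IH]; intros HS Hl Hu Hr; [simpl in Hl; lra|].
  rewrite last_cons in Hl; apply Sorted_inv in HS as [HS _].
  destruct (Forall_inv Hr) as [-> | Hx].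
  - destruct (IH HS Hl Hu (Forall_inv_tail Hr)) as [q [Hq Hle]]; exists q; split; [exact Hq|].
    simpl; rewrite dist3_xx; lra.
  - exists (polylen h u0 (x :: r)); split.
    + exists (x :: r); repeat split.
      * constructor; [exact HS | constructor; exact Hx].
      * rewrite last_cons; exact Hl.
    + simpl; pose proof (dist3_triangle (h a) (h u0) (h x)); lra.
Qed.

Lemma arclen_small_right h a b eps :
  a < b -> rectifiable h a b -> continuous3_at h a -> 0 < eps ->
  exists u0, a < u0 <= b /\ arclenr h a u0 < eps.
Proof.
  intros Hab Hfin Hc Heps.
  destruct (Lub_Rbar_approx _ (eps / 2) Hfin ltac:(lra)) as [r [[l [HS [Hl ->]]] Hr]].
  destruct (Hc (eps / 2) ltac:(lra)) as [del [Hdel Hnear]].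
  destruct (exists_gap a l (Sorted_extends Rle_trans HS)) as [d [Hd Hgap]].
  set (u0 := Rmin b (a + Rmin del d / 2)).
  pose proof (Rmin_pos del d Hdel Hd); pose proof (Rmin_l del d); pose proof (Rmin_r del d);
    pose proof (Rmin_l b (a + Rmin del d / 2)); pose proof (Rmin_r b (a + Rmin del d / 2)).
  assert (Hu0 : a < u0 <= b) by (split; [apply Rmin_glb_lt|]; unfold u0 in *; lra).
  assert (Hdu : dist3 (h a) (h u0) < eps / 2)
    by (apply Hnear; rewrite Rabs_right; unfold u0 in *; lra).
  destruct (inscribed_restart h a b u0 l HS Hl Hu0) as [q [Hq Hle]].
  { eapply Forall_impl; [|exact Hgap]; simpl.
    intros x [E | E]; [left | right; unfold u0 in *; lra]; exact E. }
  destruct (arclen_additive h a u0 b ltac:(lra) Hfin) as [_ [Hub Hadd]].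
  pose proof (inscribed_le_arclenr _ _ _ _ Hub Hq).
  exists u0; split; [exact Hu0|]; unfold arclenr, arclen in *; lra.
Qed.

Lemma arclen_small_left h a b eps :
  a < b -> rectifiable h a b -> continuous3_at h b -> 0 < eps ->
  exists u1, a <= u1 < b /\ arclenr h u1 b < eps.
Proof.
  intros Hab Hfin Hc Heps; set (h' := fun u => h (0 - u)).
  assert (Hfin' : rectifiable h' (0 - b) (0 - a))
    by (unfold rectifiable, h'; rewrite <- arclen_rev; exact Hfin).
  assert (Hc' : continuous3_at h' (0 - b)).
  { intros e He; destruct (Hc e He) as [del [Hdel Hnear]]; exists del; split; [exact Hdel|].
    intros u Hu; unfold h'; replace (0 - (0 - b)) with b by ring.
    apply Hnear; replace (0 - u - b) with (- (u - (0 - b))) by ring; rewrite Rabs_Ropp; exact Hu. }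
  destruct (arclen_small_right h' (0 - b) (0 - a) eps ltac:(lra) Hfin' Hc' Heps)
    as [u0 [Hu0 Hsmall]].
  exists (0 - u0); split; [lra|].
  unfold arclenr; rewrite (arclen_rev h _ _ 0).
  replace (0 - (0 - u0)) with u0 by ring; exact Hsmall.
Qed.

Lemma rectifiable_le g a b : rectifiable g a b -> a <= b.
Proof.
  intros Hfin; apply Rnot_lt_le; intros Hba.
  assert (Hle : Rbar_le (arclen g a b) m_infty).
  { apply (proj2 (Lub_Rbar_correct _)); intros v [l [HS [Hl _]]].
    destruct (Sorted_bounds _ _ _ HS Hl); lra. }
  unfold rectifiable in Hfin; rewrite <- Hfin in Hle; destruct Hle.
Qed.

Definition clamp (l x : R) : R := Rmax 0 (Rmin l x).

Lemma clamp_range l x : 0 <= l -> 0 <= clamp l x <= l.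
Proof.
  intros Hl; unfold clamp, Rmax, Rmin; destruct (Rle_dec l x); destruct (Rle_dec 0 _); lra.
Qed.

Lemma clamp_id l x : 0 <= x <= l -> clamp l x = x.
Proof.
  intros Hx; unfold clamp, Rmax, Rmin; destruct (Rle_dec l x); destruct (Rle_dec 0 _); lra.
Qed.

Lemma clamp_lipschitz l x y : 0 <= l -> Rabs (clamp l x - clamp l y) <= Rabs (x - y).
Proof.
  intros Hl; unfold clamp, Rmax, Rmin.
  destruct (Rle_dec l x); destruct (Rle_dec l y); repeat destruct (Rle_dec 0 _);
    unfold Rabs; repeat destruct Rcase_abs; lra.
Qed.

Section ArcLengthFunction.

Variables (g : R -> vec3) (l : R).
Hypotheses (g_rect : rectifiable g 0 l) (g_cont : continuous3 g).

Local Notation s t := (arclenr g 0 t).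

Lemma rectifiable_sub a b : 0 <= a <= b -> b <= l -> rectifiable g a b.
Proof.
  intros Hab Hbl.
  destruct (arclen_additive g 0 a l ltac:(lra) g_rect) as [_ [Hal _]].
  exact (proj1 (arclen_additive g a b l ltac:(lra) Hal)).
Qed.

Lemma arclenr_add a b c :
  0 <= a <= b -> b <= c <= l -> arclenr g a c = arclenr g a b + arclenr g b c.
Proof.
  intros Hab Hbc; pose proof (rectifiable_sub a c ltac:(lra) ltac:(lra)) as Hac.
  exact (proj2 (proj2 (arclen_additive g a b c ltac:(lra) Hac))).
Qed.

Lemma arclenr_0 : s 0 = 0.
Proof.
  pose proof (rectifiable_le _ _ _ g_rect); pose proof (arclenr_add 0 0 0 ltac:(lra) ltac:(lra)).
  lra.
Qed.

Lemma arclenr_diff t u : 0 <= t <= u -> u <= l -> arclenr g t u = s u - s t /\ s t <= s u.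
Proof.
  intros Htu Hul; pose proof (arclenr_add 0 t u ltac:(lra) ltac:(lra)).
  pose proof (arclenr_ge0 g t u ltac:(lra) (rectifiable_sub t u ltac:(lra) ltac:(lra))); lra.
Qed.

Lemma arclenr_range t : 0 <= t <= l -> 0 <= s t <= s l.
Proof.
  intros Ht; pose proof arclenr_0.
  pose proof (arclenr_diff 0 t ltac:(lra) ltac:(lra)).
  pose proof (arclenr_diff t l ltac:(lra) ltac:(lra)); lra.
Qed.

Lemma dist3_le_arclenr_diff t t' :
  0 <= t <= l -> 0 <= t' <= l -> dist3 (g t) (g t') <= Rabs (s t - s t').
Proof.
  intros Ht Ht'; destruct (Rle_dec t t') as [H | H].
  - pose proof (chord_le_arclenr g t t' H (rectifiable_sub t t' ltac:(lra) ltac:(lra))).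
    pose proof (arclenr_diff t t' ltac:(lra) ltac:(lra)).
    rewrite Rabs_minus_sym, Rabs_right; lra.
  - rewrite dist3_comm.
    pose proof (chord_le_arclenr g t' t ltac:(lra) (rectifiable_sub t' t ltac:(lra) ltac:(lra))).
    pose proof (arclenr_diff t' t ltac:(lra) ltac:(lra)); rewrite Rabs_right; lra.
Qed.

Lemma arclenr_near_right t eps :
  0 <= t <= l -> 0 < eps ->
  exists d, 0 < d /\ forall u, t <= u <= l -> u - t < d -> s u - s t < eps.
Proof.
  intros Ht Heps; destruct (Rlt_le_dec t l) as [Htl | Htl].
  - destruct (arclen_small_right g t l eps Htl (rectifiable_sub t l ltac:(lra) ltac:(lra))
                (continuous3_continuous3_at g t g_cont) Heps) as [u0 [Hu0 Hsmall]].
    exists (u0 - t); split; [lra|]; intros u Hu Hut.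
    pose proof (arclenr_diff t u0 ltac:(lra) ltac:(lra)).
    pose proof (arclenr_diff u u0 ltac:(lra) ltac:(lra)); lra.
  - exists 1; split; [lra|]; intros u Hu _; replace u with t by lra; lra.
Qed.

Lemma arclenr_near_left t eps :
  0 <= t <= l -> 0 < eps ->
  exists d, 0 < d /\ forall u, 0 <= u <= t -> t - u < d -> s t - s u < eps.
Proof.
  intros Ht Heps; destruct (Rlt_le_dec 0 t) as [Ht0 | Ht0].
  - destruct (arclen_small_left g 0 t eps Ht0 (rectifiable_sub 0 t ltac:(lra) ltac:(lra))
                (continuous3_continuous3_at g t g_cont) Heps) as [u1 [Hu1 Hsmall]].
    exists (t - u1); split; [lra|]; intros u Hu Hut.
    pose proof (arclenr_diff u1 t ltac:(lra) ltac:(lra)).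
    pose proof (arclenr_diff u1 u ltac:(lra) ltac:(lra)); lra.
  - exists 1; split; [lra|]; intros u Hu _; replace u with t by lra; lra.
Qed.

Lemma arclenr_continuous t eps :
  0 <= t <= l -> 0 < eps ->
  exists d, 0 < d /\ forall u, 0 <= u <= l -> Rabs (u - t) < d -> Rabs (s u - s t) < eps.
Proof.
  intros Ht Heps.
  destruct (arclenr_near_right t eps Ht Heps) as [d1 [Hd1 Hright]].
  destruct (arclenr_near_left t eps Ht Heps) as [d2 [Hd2 Hleft]].
  exists (Rmin d1 d2); split; [apply Rmin_pos; assumption|]; intros u Hu Hut.
  pose proof (Rmin_l d1 d2); pose proof (Rmin_r d1 d2).
  destruct (Rle_dec t u) as [Htu | Htu].
  - rewrite Rabs_right in Hut by lra; pose proof (Hright u ltac:(lra) ltac:(lra)).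
    pose proof (arclenr_diff t u ltac:(lra) ltac:(lra)); rewrite Rabs_right; lra.
  - rewrite Rabs_left in Hut by lra; pose proof (Hleft u ltac:(lra) ltac:(lra)).
    pose proof (arclenr_diff u t ltac:(lra) ltac:(lra)); rewrite Rabs_left1; lra.
Qed.

Lemma arclenr_surjective y : 0 <= y <= s l -> exists t, 0 <= t <= l /\ s t = y.
Proof.
  intros Hy; pose proof (rectifiable_le _ _ _ g_rect) as Hl.
  (* [s] is meaningless outside [0, l]; clamping makes it continuous on all of R. *)
  set (f := fun x => s (clamp l x)).
  assert (Hf : continuity f).
  { intros x eps Heps; pose proof (clamp_range l x Hl) as Hx.
    destruct (arclenr_continuous (clamp l x) eps Hx Heps) as [d [Hd Hnear]].
    exists d; split; [exact Hd|]; intros u [_ Hu]; simpl in *; unfold R_dist in *.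
    apply Hnear; [apply clamp_range, Hl|]; pose proof (clamp_lipschitz l u x Hl); lra. }
  assert (Hf0 : f 0 = 0) by (unfold f; rewrite clamp_id by lra; exact arclenr_0).
  assert (Hfl : f l = s l) by (unfold f; rewrite clamp_id by lra; reflexivity).
  destruct (IVT_gen f 0 l y Hf) as [t [Ht Hft]].
  { rewrite Hf0, Hfl, Rmin_left, Rmax_right; lra. }
  rewrite Rmin_left, Rmax_right in Ht by lra.
  exists t; split; [exact Ht|]; unfold f in Hft; rewrite clamp_id in Hft; assumption.
Qed.

End ArcLengthFunction.

(** * Symmetric curves and their arclength parametrizations *)

Section SymmetricCurve.

Variables (l : R) (g : R -> vec3).
Hypotheses (l_pos : 0 < l) (g_Sigma : Sigma l g).

Local Notation s t := (arclenr g 0 t).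
Local Notation L := (arclenr g 0 l).

Lemma Sigma_rectifiable : rectifiable g 0 l.
Proof. apply g_Sigma. Qed.

Lemma Sigma_continuous3 : continuous3 g.
Proof. apply g_Sigma. Qed.

Lemma Sigma_length_pos : 0 < L.
Proof.
  destruct g_Sigma as [_ [_ [Hpos [Hfin _]]]]; unfold curve_length in *.
  unfold arclenr; rewrite <- Hfin in Hpos; exact Hpos.
Qed.

Lemma Sigma_closed : g l = g 0.
Proof. destruct g_Sigma as [Hper _]; rewrite <- (Hper 0); f_equal; ring. Qed.

Lemma Sigma_d2 x : g (x + l / 2) = Rmat Defs.d2 (g x).
Proof.
  destruct g_Sigma as [_ [_ [_ [_ Hsym]]]]; rewrite <- (Hsym Defs.d2 (x + l / 2)).
  unfold tau, psi; f_equal; f_equal; ring.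
Qed.

Lemma Sigma_d3 x : g (l - x) = Rmat Defs.d3 (g x).
Proof.
  destruct g_Sigma as [_ [_ [_ [_ Hsym]]]]; rewrite <- (Hsym Defs.d3 x).
  unfold tau, psi; rewrite Rmat_involutive; f_equal; ring.
Qed.

Lemma arclenr_half_shift u : 0 <= u <= l / 2 -> s (u + l / 2) = s u + L / 2.
Proof.
  intros Hu.
  assert (Hshift : forall a b, arclen g (a + l / 2) (b + l / 2) = arclen g a b).
  { intros a b; rewrite arclen_shift; apply arclen_ext_dist; intros x y.
    rewrite !Sigma_d2; apply dist3_Rmat. }
  assert (Hhalf : arclenr g (l / 2) l = s (l / 2)).
  { unfold arclenr; rewrite <- (Hshift 0 (l / 2)); f_equal; f_equal; field. }
  assert (Hu' : arclenr g (l / 2) (u + l / 2) = s u).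
  { unfold arclenr; rewrite <- (Hshift 0 u); f_equal; f_equal; ring. }
  pose proof (arclenr_add g l Sigma_rectifiable 0 (l / 2) l ltac:(lra) ltac:(lra)).
  pose proof (arclenr_add g l Sigma_rectifiable 0 u (l / 2) ltac:(lra) ltac:(lra)).
  pose proof (arclenr_add g l Sigma_rectifiable u (l / 2) (u + l / 2) ltac:(lra) ltac:(lra)).
  pose proof (arclenr_add g l Sigma_rectifiable 0 u (u + l / 2) ltac:(lra) ltac:(lra)).
  lra.
Qed.

Lemma arclenr_reflect u : 0 <= u <= l -> s (l - u) = L - s u.
Proof.
  intros Hu.
  assert (Hrefl : s (l - u) = arclenr g u l).
  { unfold arclenr; rewrite (arclen_rev g _ _ l).
    replace (l - (l - u)) with u by ring; replace (l - 0) with l by ring.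
    f_equal; apply arclen_ext_dist; intros x y; rewrite !Sigma_d3; apply dist3_Rmat. }
  pose proof (arclenr_add g l Sigma_rectifiable 0 u l ltac:(lra) ltac:(lra)); lra.
Qed.

Lemma arc_repr_exists x : exists t k, 0 <= t <= l /\ x = s t + IZR k * L.
Proof.
  pose proof Sigma_length_pos as HL.
  set (k := (up (x / L) - 1)%Z); destruct (archimed (x / L)) as [Hup1 Hup2].
  assert (Hk : IZR k <= x / L < IZR k + 1) by (unfold k; rewrite minus_IZR; simpl; lra).
  assert (Hx : IZR k * L <= x < IZR k * L + L).
  { destruct Hk as [Hk1 Hk2]; apply (Rmult_le_compat_r L) in Hk1; [|lra].
    apply (Rmult_lt_compat_r L) in Hk2; [|lra].
    unfold Rdiv in *; rewrite Rmult_assoc, Rinv_l, Rmult_1_r in Hk1, Hk2; lra. }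
  destruct (arclenr_surjective g l Sigma_rectifiable Sigma_continuous3 (x - IZR k * L))
    as [t [Ht Hst]]; [lra|].
  exists t, k; split; [exact Ht | lra].
Qed.

(* The arc from [t] once around the curve to [t'] is at least the chord, since [g l = g 0]. *)
Lemma dist3_le_arc_repr t t' k k' :
  0 <= t <= l -> 0 <= t' <= l ->
  dist3 (g t) (g t') <= Rabs ((s t + IZR k * L) - (s t' + IZR k' * L)).
Proof.
  pose proof (dist3_le_arclenr_diff g l Sigma_rectifiable) as Hdist.
  assert (Hlt : forall t t' k k', 0 <= t <= l -> 0 <= t' <= l -> (k < k')%Z ->
            dist3 (g t) (g t') <= Rabs ((s t + IZR k * L) - (s t' + IZR k' * L))).
  { intros u u' j j' Hu Hu' Hj.
    assert (Hj' : IZR j + 1 <= IZR j') by (rewrite <- plus_IZR; apply IZR_le; lia).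
    pose proof Sigma_length_pos; pose proof (arclenr_0 g l Sigma_rectifiable).
    pose proof (arclenr_range g l Sigma_rectifiable u Hu).
    pose proof (arclenr_range g l Sigma_rectifiable u' Hu').
    pose proof (Hdist u l Hu ltac:(lra)); pose proof (Hdist 0 u' ltac:(lra) Hu').
    pose proof (dist3_triangle (g u) (g l) (g u')); rewrite Sigma_closed in *.
    rewrite (Rabs_minus_sym (s u)), Rabs_right in * by lra.
    rewrite (Rabs_minus_sym (s 0)), Rabs_right in * by lra.
    assert (IZR j * L + L <= IZR j' * L) by nra.
    rewrite Rabs_left1 by lra; lra. }
  intros Ht Ht'; destruct (Z.lt_trichotomy k k') as [Hk | [-> | Hk]].
  - apply Hlt; assumption.
  - replace (s t + IZR k' * L - (s t' + IZR k' * L)) with (s t - s t') by ring.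
    apply Hdist; assumption.
  - rewrite dist3_comm, Rabs_minus_sym; apply Hlt; assumption.
Qed.

Lemma arc_repr_consistent t t' k k' :
  0 <= t <= l -> 0 <= t' <= l -> s t + IZR k * L = s t' + IZR k' * L -> g t = g t'.
Proof.
  intros Ht Ht' Heq; apply dist3_eq0, Rle_antisym; [|apply dist3_ge0].
  pose proof (dist3_le_arc_repr t t' k k' Ht Ht') as H.
  rewrite Heq, Rminus_diag, Rabs_R0 in H; exact H.
Qed.

Section Parametrization.

Variable G : R -> vec3.
Hypothesis G_param : arclength_param l g G.

Lemma param_repr t k : 0 <= t <= l -> G (s t + IZR k * L) = g t.
Proof.
  destruct G_param as [Hper [_ HG]]; intros Ht.
  rewrite (periodic_IZR _ _ Hper); apply HG, Ht.
Qed.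

Lemma param_nonexpansive : nonexpansive G.
Proof.
  intros x y.
  destruct (arc_repr_exists x) as [t [k [Ht ->]]].
  destruct (arc_repr_exists y) as [t' [k' [Ht' ->]]].
  rewrite !param_repr by assumption; apply dist3_le_arc_repr; assumption.
Qed.

Lemma param_length : arclen G 0 L = Finite L.
Proof.
  pose proof Sigma_length_pos.
  destruct (arclen_nonexpansive_le G 0 L param_nonexpansive ltac:(lra)) as [Hfin Hle].
  destruct (arclen_reparam_ge g G (fun t => s t) 0 l ltac:(lra)) as [_ Hge].
  - intros x y Hx Hy Hxy; apply (arclenr_diff g l Sigma_rectifiable); lra.
  - intros t Ht; apply (proj2 (proj2 G_param)), Ht.
  - rewrite (arclenr_0 g l Sigma_rectifiable); exact Hfin.
  - rewrite (arclenr_0 g l Sigma_rectifiable) in Hge.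
    rewrite <- Hfin; f_equal; unfold arclenr in *; lra.
Qed.

Lemma param_d2 x : Rmat Defs.d2 (G (x - L / 2)) = G x.
Proof.
  destruct (arc_repr_exists x) as [u [k [Hu ->]]]; rewrite param_repr by exact Hu.
  destruct (Rle_dec (l / 2) u) as [Hge | Hlt].
  - pose proof (arclenr_half_shift (u - l / 2) ltac:(lra)) as Hs.
    replace (u - l / 2 + l / 2) with u in Hs by ring.
    replace (s u + IZR k * L - L / 2) with (s (u - l / 2) + IZR k * L) by lra.
    rewrite param_repr by lra; rewrite <- Sigma_d2; f_equal; ring.
  - pose proof (arclenr_half_shift u ltac:(lra)) as Hs.
    replace (s u + IZR k * L - L / 2) with (s (u + l / 2) + IZR (k - 1) * L)
      by (rewrite minus_IZR; simpl; lra).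
    rewrite param_repr, Sigma_d2 by lra; apply Rmat_involutive.
Qed.

Lemma param_d3 x : Rmat Defs.d3 (G (- x + L)) = G x.
Proof.
  destruct (arc_repr_exists x) as [u [k [Hu ->]]]; rewrite param_repr by exact Hu.
  pose proof (arclenr_reflect u Hu).
  replace (- (s u + IZR k * L) + L) with (s (l - u) + IZR (- k) * L) by (rewrite opp_IZR; lra).
  rewrite param_repr, Sigma_d3 by lra; apply Rmat_involutive.
Qed.

Lemma param_d1 x : Rmat Defs.d1 (G (- x + L / 2)) = G x.
Proof.
  rewrite <- (param_d2 x), <- (param_d3 (x - L / 2)).
  replace (- (x - L / 2) + L) with (- x + L / 2 + L) by ring.
  destruct G_param as [Hper _]; rewrite Hper, Rmat_d2_d3; reflexivity.
Qed.

Lemma param_Sigma : Sigma L G.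
Proof.
  pose proof Sigma_length_pos.
  split; [apply G_param|]; split; [apply nonexpansive_continuous3, param_nonexpansive|].
  unfold curve_length; rewrite param_length; split; [simpl; lra|]; split; [reflexivity|].
  intros [] t; unfold tau, psi; [reflexivity | apply param_d1 | apply param_d2 | apply param_d3].
Qed.

End Parametrization.

Lemma arclength_param_exists : exists G, arclength_param l g G.
Proof.
  destruct (functional_choice (fun x t => 0 <= t <= l /\ exists k, x = s t + IZR k * L))
    as [rep Hrep].
  { intros x; destruct (arc_repr_exists x) as [t [k [Ht Hx]]].
    exists t; split; [exact Ht | exists k; exact Hx]. }
  pose proof (arclenr_0 g l Sigma_rectifiable).
  exists (fun x => g (rep x)); split; [|split].
  - intros x; destruct (Hrep x) as [Hx [k Hk]], (Hrep (x + L)) as [HxL [k' Hk']].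
    apply (arc_repr_consistent _ _ k' (k + 1) HxL Hx).
    rewrite plus_IZR, Rmult_plus_distr_r, Rmult_1_l; lra.
  - destruct (Hrep 0) as [H0 [k Hk]].
    apply (arc_repr_consistent (rep 0) 0 k 0 H0 ltac:(lra)); simpl; lra.
  - intros t Ht; destruct (Hrep (s t)) as [Hst [k Hk]].
    apply (arc_repr_consistent _ _ k 0 Hst Ht); simpl; lra.
Qed.

End SymmetricCurve.

Theorem lemma3p12 (l : R) (g : R -> vec3) :
  0 < l -> Sigma l g ->
  (exists G : R -> vec3, arclength_param l g G) /\
  (forall G : R -> vec3, arclength_param l g G ->
     Sigma (real (curve_length l g)) G).
Proof.
  intros Hl Hg; split.
  - exact (arclength_param_exists l g Hl Hg).
  - exact (param_Sigma l g Hl Hg).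
Qed.
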